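(* Let $1<q\le p<r\le s<\infty$ and let $\mu$ be a finite measure on $(X,\Sigma)$, $X=(0,1)$. If $L^{p,q)}(X,\mu)\subseteq L^{r,s)}(X,\mu)$, then there is a constant $M>0$ such that $\mu(A)\ge M$ for every $A\in\Sigma$ with $\mu(A)>0$.
   Context: $X=(0,1)$ with a $\sigma$-algebra $\Sigma$. For a measurable $f$ on $X$, $\lambda_f(y)=\mu\{x:|f(x)|>y\}$ ($y>0$) and $f^*(t)=\inf\{y>0:\lambda_f(y)\le t\}$ ($t>0$). For $1<p<\infty$, $1<q<\infty$, $L^{p,q)}(X,\mu)$ consists of measurable $f$ with $\|f\|_{p,q),\mu}=\sup_{0<\varepsilon<q-1}\big(\frac qp\varepsilon\int_0^1 t^{\frac qp-1}[f^*(t)]^{q-\varepsilon}dt\big)^{1/(q-\varepsilon)}<\infty$; $L^{r,s)}(X,\mu)$ is defined likewise with $r,s$. *)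

From Stdlib Require Import Reals Lra ClassicalEpsilon.
Open Scope R_scope.

Definition X : Type := { x : R | 0 < x < 1 }.

Record sigma_algebra (Sigma : (X -> Prop) -> Prop) : Prop := {
  sa_full  : Sigma (fun _ => True);
  sa_compl : forall A, Sigma A -> Sigma (fun x => ~ A x);
  sa_union : forall A : nat -> X -> Prop,
      (forall n, Sigma (A n)) -> Sigma (fun x => exists n, A n x)
}.

Record finite_measure (Sigma : (X -> Prop) -> Prop) (mu : (X -> Prop) -> R) : Prop := {
  fm_nonneg : forall A, Sigma A -> 0 <= mu A;
  fm_empty  : mu (fun _ => False) = 0;
  fm_sigma_additive : forall A : nat -> X -> Prop,
      (forall n, Sigma (A n)) ->
      (forall n m x, n <> m -> A n x -> A m x -> False) ->
      infinite_sum (fun n => mu (A n)) (mu (fun x => exists n, A n x))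
}.

Definition measurable (Sigma : (X -> Prop) -> Prop) (f : X -> R) : Prop :=
  forall a : R, Sigma (fun x => a < f x).

Definition distrib (mu : (X -> Prop) -> R) (f : X -> R) (y : R) : R :=
  mu (fun x => y < Rabs (f x)).

(* greatest lower bound; infimum (0 if it does not exist, never used here) *)
Definition is_glb (E : R -> Prop) (m : R) : Prop :=
  (forall x, E x -> m <= x) /\ (forall b, (forall x, E x -> b <= x) -> b <= m).

Definition Rinf (E : R -> Prop) : R :=
  match excluded_middle_informative (exists m, is_glb E m) with
  | left H => proj1_sig (constructive_indefinite_description _ H)
  | right _ => 0
  end.

Definition fstar (mu : (X -> Prop) -> R) (f : X -> R) (t : R) : R :=
  Rinf (fun y => 0 < y /\ distrib mu f y <= t).

(* real power with the convention 0^a = 0 (a > 0 in all uses) *)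
Definition rpow (x a : R) : R := if Rle_dec x 0 then 0 else Rpower x a.

Definition gl_integrand (mu : (X -> Prop) -> R) (p q eps : R) (f : X -> R) (t : R) : R :=
  rpow t (q / p - 1) * rpow (fstar mu f t) (q - eps).

(* ||f||_{p,q),mu} <= C, where the (nonnegative, improper at 0) integral
   over (0,1) is the supremum over delta in (0,1) of the Riemann integrals
   over [delta,1] (the integrand is Riemann integrable there) *)
Definition gl_norm_le (mu : (X -> Prop) -> R) (p q : R) (f : X -> R) (C : R) : Prop :=
  forall eps, 0 < eps < q - 1 ->
  forall delta, 0 < delta < 1 ->
  exists pr : Riemann_integrable (gl_integrand mu p q eps f) delta 1,
    rpow (q / p * eps * RiemannInt pr) (1 / (q - eps)) <= C.

Definition in_GL (Sigma : (X -> Prop) -> Prop) (mu : (X -> Prop) -> R)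
    (p q : R) (f : X -> R) : Prop :=
  measurable Sigma f /\ exists C : R, gl_norm_le mu p q f C.

(* If there are sets of arbitrarily small positive measure, choose [B n] with
   [0 < mu (B n) < 2^-(n+1)].  The masses [T k] of [tail k] minus the limsup set
   are positive and decrease to [0], and the step function equal to [T k ^ (-a)]
   on the layer [tail k \ tail (k+1)] has decreasing rearrangement [T k ^ (-a)]
   on [[T (k+1), T k)].  Take [1/r < a < 1/p].  Then [f^*(t) <= t^(-a)] bounds
   all the integrals defining the [L^{p,q)}] norm, whereas for a fixed small
   [eps] the [L^{r,s)}] integral over [[T k / 2, 1]] is at least a multiple of
   [T k ^ (-gamma)] with [gamma > 0], which is unbounded as [k] grows. *)

From Stdlib Require Import Reals Lra Lia Arith Wf_nat Classical ClassicalEpsilon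
  FunctionalExtensionality PropExtensionality.
From Coquelicot Require Import Coquelicot.
Open Scope R_scope.

Lemma pred_ext {T : Type} (A B : T -> Prop) : (forall x, A x <-> B x) -> A = B.
Proof.
  intros H; apply functional_extensionality; intro x; apply propositional_extensionality; auto.
Qed.

Lemma infinite_sum_le (u : nat -> R) l M :
  infinite_sum u l -> (forall N, sum_f_R0 u N <= M) -> l <= M.
Proof.
  intros Hl HM. destruct (Rle_lt_dec l M) as [h|h]; auto.
  destruct (Hl (l - M)) as [N HN]; [lra|].
  specialize (HN N (le_n N)). unfold R_dist in HN. apply Rabs_def2 in HN.
  specialize (HM N). lra.
Qed.

Section sigma_algebra_facts.

Variable Sigma : (X -> Prop) -> Prop.
Hypothesis HS : sigma_algebra Sigma.

Lemma sigma_empty : Sigma (fun _ => False).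
Proof.
  replace (fun _ : X => False) with (fun x : X => ~ (fun _ : X => True) x).
  - exact (sa_compl _ HS _ (sa_full _ HS)).
  - apply pred_ext; tauto.
Qed.

Lemma sigma_and_const (P : Prop) A : Sigma A -> Sigma (fun x => P /\ A x).
Proof.
  intros HA. destruct (classic P) as [HP|HP].
  - replace (fun x => P /\ A x) with A; auto. apply pred_ext; tauto.
  - replace (fun x => P /\ A x) with (fun _ : X => False).
    + exact sigma_empty.
    + apply pred_ext; tauto.
Qed.

Lemma sigma_or A B : Sigma A -> Sigma B -> Sigma (fun x => A x \/ B x).
Proof.
  intros HA HB.
  replace (fun x => A x \/ B x)
    with (fun x => exists n, (fun n => match n with O => A | _ => B end) n x).
  - apply (sa_union _ HS). intros [|n]; auto.
  - apply pred_ext; intro x; split.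
    + intros [[|n] Hn]; auto.
    + intros [Ha|Hb]; [exists O|exists 1%nat]; auto.
Qed.

Lemma sigma_and A B : Sigma A -> Sigma B -> Sigma (fun x => A x /\ B x).
Proof.
  intros HA HB.
  replace (fun x => A x /\ B x) with (fun x => ~ ((fun x => ~ A x) x \/ (fun x => ~ B x) x)).
  - apply (sa_compl _ HS), sigma_or; apply (sa_compl _ HS); auto.
  - apply pred_ext; intro x; tauto.
Qed.

Lemma sigma_all (A : nat -> X -> Prop) :
  (forall n, Sigma (A n)) -> Sigma (fun x => forall n, A n x).
Proof.
  intros HA.
  replace (fun x => forall n, A n x) with (fun x => ~ (exists n, (fun n x => ~ A n x) n x)).
  - apply (sa_compl _ HS), (sa_union _ HS). intro n; apply (sa_compl _ HS); auto.
  - apply pred_ext; intro x; split.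
    + intros Hx n. apply NNPP. intro Hn. apply Hx. exists n; auto.
    + intros Hx [n Hn]; auto.
Qed.

End sigma_algebra_facts.

Section measure_facts.

Variables (Sigma : (X -> Prop) -> Prop) (mu : (X -> Prop) -> R).
Hypotheses (HS : sigma_algebra Sigma) (Hm : finite_measure Sigma mu).

Lemma measure_union2 A B : Sigma A -> Sigma B -> (forall x, A x -> B x -> False) ->
  mu (fun x => A x \/ B x) = mu A + mu B.
Proof.
  intros HA HB Hd.
  set (s := fun n : nat => match n with O => A | 1%nat => B | _ => fun _ : X => False end).
  assert (Hs : forall n, Sigma (s n)) by (intros [|[|n]]; [auto|auto|exact (sigma_empty Sigma HS)]).
  assert (Hdis : forall n m x, n <> m -> s n x -> s m x -> False)
    by (intros [|[|n]] [|[|m]] x Hnm; simpl; try tauto; intros; eauto).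
  pose proof (fm_sigma_additive _ _ Hm s Hs Hdis) as Hsum.
  replace (fun x => exists n, s n x) with (fun x => A x \/ B x) in Hsum.
  2:{ apply pred_ext; intro x; split.
      - intros [Ha|Hb]; [exists O|exists 1%nat]; auto.
      - intros [[|[|n]] Hn]; simpl in Hn; tauto. }
  apply (uniqueness_sum (fun n => mu (s n))); auto.
  assert (Hpartial : forall n, sum_f_R0 (fun n => mu (s n)) (S n) = mu A + mu B).
  { induction n as [|n IH]; [simpl; ring|].
    change (sum_f_R0 (fun n => mu (s n)) (S n) + mu (fun _ => False) = mu A + mu B).
    rewrite IH, (fm_empty _ _ Hm). ring. }
  intros eps He. exists 1%nat. intros [|n] Hn; [lia|].
  rewrite Hpartial. unfold R_dist. rewrite Rminus_diag, Rabs_R0; auto.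
Qed.

Lemma measure_mono A B : Sigma A -> Sigma B -> (forall x, A x -> B x) -> mu A <= mu B.
Proof.
  intros HA HB Hab.
  assert (HBA : Sigma (fun x => B x /\ ~ A x)) by (apply (sigma_and Sigma HS), (sa_compl _ HS); auto).
  replace B with (fun x => A x \/ (fun x => B x /\ ~ A x) x).
  - rewrite measure_union2 by (auto; intros x Ha [_ Hn]; auto).
    pose proof (fm_nonneg _ _ Hm _ HBA). lra.
  - apply pred_ext; intro x; split.
    + intros [Ha|[Hb _]]; auto.
    + intros Hb. destruct (classic (A x)); auto.
Qed.

Lemma measure_countable_subadditive (A : nat -> X -> Prop) (u : nat -> R) M :
  (forall n, Sigma (A n)) -> (forall n, mu (A n) <= u n) ->
  (forall N, sum_f_R0 u N <= M) -> mu (fun x => exists n, A n x) <= M.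
Proof.
  intros HA Hu HM.
  set (E := fun n x => A n x /\ ~ (exists j, (j < n)%nat /\ A j x)).
  assert (HE : forall n, Sigma (E n)).
  { intro n. apply (sigma_and Sigma HS), (sa_compl _ HS); auto.
    apply (sa_union _ HS). intro j. apply (sigma_and_const Sigma HS); auto. }
  assert (Hd : forall n m x, n <> m -> E n x -> E m x -> False).
  { intros n m x Hnm [Hn Hn'] [Hm1 Hm']. destruct (Nat.lt_ge_cases n m).
    - apply Hm'. exists n; auto.
    - apply Hn'. exists m; split; auto; lia. }
  pose proof (fm_sigma_additive _ _ Hm E HE Hd) as Hsum.
  replace (fun x => exists n, E n x) with (fun x => exists n, A n x) in Hsum.
  2:{ apply pred_ext; intro x; split.
      - intros [n Hn]. revert Hn. induction n as [n IH] using lt_wf_ind. intro Hn.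
        destruct (classic (exists j, (j < n)%nat /\ A j x)) as [[j [Hj Hj']]|Hno].
        + apply (IH j); auto.
        + exists n. split; auto.
      - intros [n [Hn _]]; exists n; auto. }
  apply (infinite_sum_le _ _ _ Hsum). intro N.
  apply Rle_trans with (sum_f_R0 u N); auto.
  apply sum_Rle. intros n _. apply Rle_trans with (mu (A n)); auto.
  apply measure_mono; auto. intros x [h _]; auto.
Qed.

End measure_facts.

Lemma Rpower_pos x y : 0 < Rpower x y.
Proof. apply exp_pos. Qed.

Lemma Rpower_1_base y : Rpower 1 y = 1.
Proof. unfold Rpower. rewrite ln_1, Rmult_0_r, exp_0. reflexivity. Qed.

Lemma Rpower_opp_le x y a : 0 < x <= y -> 0 <= a -> Rpower y (-a) <= Rpower x (-a).
Proof.
  intros Hxy Ha. rewrite !Rpower_Ropp. apply Rinv_le_contravar; [apply Rpower_pos|].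
  apply Rle_Rpower_l; auto.
Qed.

Lemma Rpower_opp_lt x y a : 0 < x < y -> 0 < a -> Rpower y (-a) < Rpower x (-a).
Proof.
  intros Hxy Ha. rewrite !Rpower_Ropp. apply Rinv_lt_contravar.
  - apply Rmult_lt_0_compat; apply Rpower_pos.
  - apply Rlt_Rpower_l; auto.
Qed.

Lemma Rpower_opp_ge1 x a : 0 < x <= 1 -> 0 <= a -> 1 <= Rpower x (-a).
Proof. intros Hx Ha. rewrite <- (Rpower_1_base (-a)). apply Rpower_opp_le; auto; lra. Qed.

Lemma continuous_Rpower e z : 0 < z -> continuous (fun t => Rpower t e) z.
Proof.
  intros Hz. apply continuity_pt_filterlim, derivable_continuous_pt.
  exists (e * Rpower z (e - 1)). apply derivable_pt_lim_power; auto.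
Qed.

Lemma rpow_pos x y : 0 < x -> rpow x y = Rpower x y.
Proof. intros H. unfold rpow. destruct Rle_dec; auto; lra. Qed.

Lemma rpow_0 y : rpow 0 y = 0.
Proof. unfold rpow. destruct Rle_dec; auto; lra. Qed.

Lemma rpow_nonneg x y : 0 <= rpow x y.
Proof. unfold rpow. destruct Rle_dec; [lra|left; apply Rpower_pos]. Qed.

Lemma rpow_le_base x y e : 0 <= x <= y -> 0 <= e -> rpow x e <= rpow y e.
Proof.
  intros Hxy He. destruct (Rle_lt_dec x 0) as [h|h].
  - replace x with 0 by lra. rewrite rpow_0. apply rpow_nonneg.
  - rewrite !rpow_pos by lra. apply Rle_Rpower_l; lra.
Qed.

Lemma rpow_le_1_plus Z L e : 0 <= Z <= L -> 0 < e <= 1 -> rpow Z e <= 1 + L.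
Proof.
  intros HZ He. unfold rpow. destruct Rle_dec as [h|h]; [lra|].
  destruct (Rle_lt_dec Z 1) as [h1|h1].
  - apply Rle_trans with (Rpower 1 e); [apply Rle_Rpower_l; lra|].
    rewrite Rpower_1_base; lra.
  - apply Rle_trans with (Rpower Z 1); [apply Rle_Rpower; lra|]. rewrite Rpower_1; lra.
Qed.

Lemma Rpower_opp_unbounded_at_0 k g e C : 0 < k -> 0 < g -> 0 < e ->
  exists rho, 0 < rho /\ forall t, 0 < t < rho -> C < Rpower (k * Rpower t (-g)) e.
Proof.
  intros Hk Hg He.
  set (W := Rpower (Rmax C 1) (/ e)).
  exists (Rpower (W / k) (- / g)). split; [apply Rpower_pos|]. intros t Ht.
  assert (HW : 0 < W) by apply Rpower_pos.
  assert (Hrho : Rpower (Rpower (W / k) (- / g)) (- g) = W / k).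
  { rewrite Rpower_mult. replace (- / g * - g) with 1 by (field; lra).
    apply Rpower_1, Rdiv_lt_0_compat; lra. }
  assert (Hlt : W < k * Rpower t (- g)).
  { replace W with (k * (W / k)) by (field; lra). apply Rmult_lt_compat_l; auto.
    rewrite <- Hrho. apply Rpower_opp_lt; auto. }
  apply Rle_lt_trans with (Rpower W e).
  - unfold W. rewrite Rpower_mult. replace (/ e * e) with 1 by (field; lra).
    rewrite Rpower_1 by (pose proof (Rmax_r C 1); lra). apply Rmax_l.
  - apply Rlt_Rpower_l; lra.
Qed.

Lemma RInt_Rpower_le e d : 0 < e + 1 -> 0 < d <= 1 ->
  ex_RInt (fun t => Rpower t e) d 1 /\ RInt (fun t => Rpower t e) d 1 <= / (e + 1).
Proof.
  intros He Hd.
  pose (G := fun t => / (e + 1) * Rpower t (e + 1)).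
  assert (HG : is_RInt (fun t => Rpower t e) d 1 (minus (G 1) (G d))).
  { apply (is_RInt_derive (V := R_CompleteNormedModule) G);
      intros x Hx; rewrite Rmin_left, Rmax_right in Hx by lra.
    - apply is_derive_Reals.
      replace (Rpower x e) with (/ (e + 1) * ((e + 1) * Rpower x (e + 1 - 1))).
      + apply (derivable_pt_lim_scal (fun t => Rpower t (e + 1))).
        apply derivable_pt_lim_power; lra.
      + replace (e + 1 - 1) with e by ring. field. lra.
    - apply continuous_Rpower; lra. }
  split; [eexists; eauto|].
  rewrite (is_RInt_unique _ _ _ _ HG). change (minus (G 1) (G d)) with (G 1 - G d).
  unfold G. rewrite Rpower_1_base.
  assert (0 < / (e + 1) * Rpower d (e + 1))
    by (apply Rmult_lt_0_compat; [apply Rinv_0_lt_compat; lra|apply Rpower_pos]).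
  lra.
Qed.

(* The shape of the decreasing rearrangement of the counterexample function. *)
Record staircase (T : nat -> R) (a : R) (g : R -> R) : Prop := {
  stair_range : forall k, 0 < T k <= 1;
  stair_antitone : forall k m, (k <= m)%nat -> T m <= T k;
  stair_vanishing : forall rho, 0 < rho -> exists k, T k < rho;
  stair_zero : forall t, T O <= t -> g t = 0;
  stair_step : forall k t, T (S k) <= t < T k -> g t = Rpower (T k) (-a)
}.

Definition weighted_power (g : R -> R) (al be t : R) : R := rpow t al * rpow (g t) be.

Lemma weighted_power_nonneg g al be t : 0 <= weighted_power g al be t.
Proof. apply Rmult_le_pos; apply rpow_nonneg. Qed.

Section staircase_integrals.

Variables (T : nat -> R) (a : R) (g : R -> R).
Hypothesis Hg : staircase T a g.
Hypothesis a_pos : 0 < a.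

Lemma staircase_cover t : 0 < t -> T O <= t \/ exists k, T (S k) <= t < T k.
Proof.
  intros Ht. apply NNPP. intro Hno.
  assert (Hall : forall n, t < T n).
  { induction n as [|n IH].
    - apply Rnot_le_lt. intro h. apply Hno. auto.
    - apply Rnot_le_lt. intro h. apply Hno. right. exists n. lra. }
  destruct (stair_vanishing _ _ _ Hg t Ht) as [k Hk]. specialize (Hall k). lra.
Qed.

Lemma staircase_ge k t : 0 < t < T k -> Rpower (T k) (-a) <= g t.
Proof.
  intros Ht. destruct (staircase_cover t ltac:(lra)) as [h|[j Hj]].
  - pose proof (stair_antitone _ _ _ Hg O k (Nat.le_0_l k)). lra.
  - rewrite (stair_step _ _ _ Hg j t Hj).
    destruct (le_lt_dec k j) as [h|h].
    + apply Rpower_opp_le; [split; [apply Hg|apply Hg; exact h]|lra].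
    + pose proof (stair_antitone _ _ _ Hg (S j) k h). lra.
Qed.

Lemma staircase_le t : 0 < t -> g t = 0 \/ 1 <= g t <= Rpower t (-a).
Proof.
  intros Ht. destruct (staircase_cover t Ht) as [h|[j Hj]].
  - left. apply (stair_zero _ _ _ Hg); auto.
  - right. rewrite (stair_step _ _ _ Hg j t Hj). split.
    + apply Rpower_opp_ge1; [apply Hg|lra].
    + apply Rpower_opp_le; lra.
Qed.

Lemma ex_RInt_weighted_power al be d : 0 < d <= 1 -> ex_RInt (weighted_power g al be) d 1.
Proof.
  intros Hd. destruct (stair_vanishing _ _ _ Hg d ltac:(lra)) as [k Hk].
  assert (Hd' : T k <= d <= 1) by lra. clear Hk Hd. revert d Hd'.
  induction k as [|k IH]; intros d Hd'.
  - apply (ex_RInt_ext (V := R_NormedModule) (fun _ : R => 0)); [|apply ex_RInt_const].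
    intros x Hx. rewrite Rmin_left, Rmax_right in Hx by lra.
    unfold weighted_power. rewrite (stair_zero _ _ _ Hg) by lra.
    rewrite rpow_0, Rmult_0_r. reflexivity.
  - destruct (Rle_lt_dec (T k) d) as [h|h]; [apply IH; lra|].
    apply (ex_RInt_Chasles _ d (T k) 1); [|apply IH; split; [lra|apply Hg]].
    pose proof (stair_range _ _ _ Hg (S k)).
    apply (ex_RInt_ext (fun t => Rpower t al * rpow (Rpower (T k) (-a)) be)).
    + intros x Hx. rewrite Rmin_left, Rmax_right in Hx by lra.
      unfold weighted_power. rewrite (stair_step _ _ _ Hg k x), (rpow_pos x al) by lra.
      reflexivity.
    + apply (ex_RInt_continuous (V := R_CompleteNormedModule)). intros z Hz.
      rewrite Rmin_left, Rmax_right in Hz by lra.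
      apply (continuous_mult (fun t => Rpower t al) (fun _ => rpow (Rpower (T k) (-a)) be)).
      * apply continuous_Rpower; lra.
      * apply continuous_const.
Qed.

(* Since [g t <= t ^ (-a)], the integrand is dominated by [t ^ (al - a q)]. *)
Lemma RInt_weighted_power_le al be q d : 0 < be <= q -> 0 < al - a * q + 1 -> 0 < d <= 1 ->
  0 <= RInt (weighted_power g al be) d 1 <= / (al - a * q + 1).
Proof.
  intros Hbe He Hd.
  pose proof (ex_RInt_weighted_power al be d Hd) as Hex.
  destruct (RInt_Rpower_le (al - a * q) d He Hd) as [Hex' Hle].
  split.
  - apply RInt_ge_0; auto; [lra|]. intros; apply weighted_power_nonneg.
  - eapply Rle_trans; [|apply Hle]. apply RInt_le; auto; [lra|].
    intros t Ht. unfold weighted_power. rewrite (rpow_pos t al) by lra.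
    destruct (staircase_le t ltac:(lra)) as [h|[h1 h2]].
    + rewrite h, rpow_0, Rmult_0_r. left; apply Rpower_pos.
    + rewrite (rpow_pos (g t) be) by lra.
      replace (al - a * q) with (al + - a * q) by ring. rewrite Rpower_plus.
      apply Rmult_le_compat_l; [left; apply Rpower_pos|].
      apply Rle_trans with (Rpower (g t) q); [apply Rle_Rpower; lra|].
      rewrite <- Rpower_mult. apply Rle_Rpower_l; lra.
Qed.

(* On [[T k / 2, T k]] the integrand is at least [(T k / 2) ^ al * T k ^ (-a be)]. *)
Lemma RInt_weighted_power_ge al be k : 0 <= al -> 0 < be ->
  Rpower (/ 2) (1 + al) * Rpower (T k) (- (a * be - (1 + al)))
  <= RInt (weighted_power g al be) (T k / 2) 1.
Proof.
  intros Hal Hbe. destruct (stair_range _ _ _ Hg k) as [HT0 HT1].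
  pose proof (ex_RInt_weighted_power al be (T k / 2) ltac:(lra)) as Hex.
  assert (E1 : ex_RInt (weighted_power g al be) (T k / 2) (T k))
    by (apply (ex_RInt_Chasles_1 (V := R_CompleteNormedModule) _ _ _ 1); auto; lra).
  assert (E2 : ex_RInt (weighted_power g al be) (T k) 1)
    by (apply (ex_RInt_Chasles_2 (V := R_CompleteNormedModule) _ (T k / 2)); auto; lra).
  rewrite <- (RInt_Chasles (V := R_CompleteNormedModule) _ _ _ _ E1 E2).
  change (plus ?x ?y) with (x + y).
  assert (0 <= RInt (weighted_power g al be) (T k) 1)
    by (apply RInt_ge_0; auto; intros; apply weighted_power_nonneg).
  assert (Hstep : (T k - T k / 2) * (Rpower (T k / 2) al * Rpower (Rpower (T k) (-a)) be)
                  <= RInt (weighted_power g al be) (T k / 2) (T k)).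
  { rewrite <- (RInt_const (V := R_CompleteNormedModule)).
    apply RInt_le; auto; [lra|apply ex_RInt_const|]. intros t Ht.
    unfold weighted_power. pose proof (staircase_ge k t ltac:(lra)).
    pose proof (Rpower_pos (T k) (-a)).
    rewrite (rpow_pos t al), (rpow_pos (g t) be) by lra.
    apply Rmult_le_compat; try (left; apply Rpower_pos); apply Rle_Rpower_l; lra. }
  replace (Rpower (/ 2) (1 + al) * Rpower (T k) (- (a * be - (1 + al))))
    with ((T k - T k / 2) * (Rpower (T k / 2) al * Rpower (Rpower (T k) (-a)) be));
    [lra|].
  replace (T k - T k / 2) with (Rpower (T k / 2) 1) by (rewrite Rpower_1; lra).
  rewrite <- Rmult_assoc, <- Rpower_plus, Rpower_mult.
  replace (T k / 2) with (T k * / 2) by (unfold Rdiv; ring).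
  rewrite <- Rpower_mult_distr by lra.
  replace (- (a * be - (1 + al))) with ((1 + al) + - a * be) by ring.
  rewrite (Rpower_plus (1 + al) (- a * be) (T k)), (Rpower_plus 1 al (T k)). ring.
Qed.

End staircase_integrals.

Lemma Rinf_is_glb E m : is_glb E m -> Rinf E = m.
Proof.
  intros [H1 H2]. unfold Rinf. destruct excluded_middle_informative as [h|h].
  - destruct constructive_indefinite_description as [m' [H1' H2']]; simpl.
    apply Rle_antisym; auto.
  - exfalso; apply h; exists m; split; auto.
Qed.

Lemma half_pow_vanishing rho : 0 < rho -> exists k, (/ 2) ^ k < rho.
Proof.
  intros Hr. destruct (pow_lt_1_zero (/ 2)) with (y := rho) as [N HN];
    [rewrite Rabs_pos_eq; lra|auto|].
  exists N. specialize (HN N (le_n N)). rewrite Rabs_pos_eq in HN; auto.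
  apply pow_le; lra.
Qed.

Lemma half_pow_sum k N :
  sum_f_R0 (fun n => (/ 2) ^ S (k + n)) N = (/ 2) ^ k - (/ 2) ^ S (k + N).
Proof.
  induction N as [|N IH].
  - simpl. rewrite Nat.add_0_r. lra.
  - change (sum_f_R0 (fun n => (/ 2) ^ S (k + n)) N + (/ 2) ^ S (k + S N)
            = (/ 2) ^ k - (/ 2) ^ S (k + S N)).
    rewrite IH, Nat.add_succ_r. simpl. lra.
Qed.

Section small_sets.

Variables (Sigma : (X -> Prop) -> Prop) (mu : (X -> Prop) -> R).
Hypotheses (HS : sigma_algebra Sigma) (Hm : finite_measure Sigma mu).
Variable B : nat -> X -> Prop.
Hypothesis B_meas : forall n, Sigma (B n).
Hypothesis B_pos : forall n, 0 < mu (B n).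
Hypothesis B_small : forall n, mu (B n) < (/ 2) ^ S n.

Definition tail k x := exists n, (k <= n)%nat /\ B n x.
Definition limsup_set x := forall k, tail k x.
Definition tail_out k x := tail k x /\ ~ limsup_set x.
Definition layer k x := tail k x /\ ~ tail (S k) x.

Definition tail_mass k := mu (tail_out k).

Lemma tail_antitone j m x : (j <= m)%nat -> tail m x -> tail j x.
Proof. intros H [n [Hn Hb]]. exists n; split; auto; lia. Qed.

Lemma sigma_tail k : Sigma (tail k).
Proof. apply (sa_union _ HS). intro n. apply (sigma_and_const Sigma HS); auto. Qed.

Lemma sigma_limsup_set : Sigma limsup_set.
Proof. apply (sigma_all Sigma HS tail), sigma_tail. Qed.

Lemma sigma_tail_out k : Sigma (tail_out k).
Proof.
  apply (sigma_and Sigma HS); [|apply (sa_compl _ HS)]; auto using sigma_tail, sigma_limsup_set.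
Qed.

Lemma sigma_layer k : Sigma (layer k).
Proof. apply (sigma_and Sigma HS); [|apply (sa_compl _ HS)]; auto using sigma_tail. Qed.

Lemma measure_tail_le k : mu (tail k) <= (/ 2) ^ k.
Proof.
  replace (tail k) with (fun x => exists n, B (k + n)%nat x).
  - apply (measure_countable_subadditive Sigma mu HS Hm _ (fun n => (/ 2) ^ S (k + n))); auto.
    + intro n. left. auto.
    + intro N. rewrite half_pow_sum. pose proof (pow_lt (/ 2) (S (k + N))). lra.
  - apply pred_ext; intro x; split.
    + intros [n Hn]. exists (k + n)%nat; split; auto; lia.
    + intros [n [Hn Hb]]. exists (n - k)%nat. replace (k + (n - k))%nat with n by lia; auto.
Qed.

Lemma measure_limsup_set : mu limsup_set = 0.
Proof.
  assert (H0 : 0 <= mu limsup_set) by (apply (fm_nonneg _ _ Hm), sigma_limsup_set).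
  apply Rle_antisym; auto. apply Rnot_lt_le. intro Hpos.
  destruct (half_pow_vanishing _ Hpos) as [k Hk].
  assert (mu limsup_set <= mu (tail k)); [|pose proof (measure_tail_le k); lra].
  apply (measure_mono Sigma mu HS Hm); auto using sigma_limsup_set, sigma_tail.
Qed.

Lemma tail_mass_antitone k m : (k <= m)%nat -> tail_mass m <= tail_mass k.
Proof.
  intros Hkm. apply (measure_mono Sigma mu HS Hm); auto using sigma_tail_out.
  intros x [Hv Hl]; split; auto. eapply tail_antitone; eauto.
Qed.

Lemma tail_mass_le k : tail_mass k <= (/ 2) ^ k.
Proof.
  eapply Rle_trans; [|apply measure_tail_le].
  apply (measure_mono Sigma mu HS Hm); auto using sigma_tail_out, sigma_tail.
  intros x [h _]; auto.
Qed.

(* [tail k] contains [B k] and differs from [tail_out k] by a null set. *)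
Lemma tail_mass_pos k : 0 < tail_mass k.
Proof.
  assert (Hsplit : mu (tail k) = tail_mass k + mu (fun x => tail k x /\ limsup_set x)).
  { replace (tail k) with (fun x => tail_out k x \/ (fun x => tail k x /\ limsup_set x) x) at 1.
    - apply (measure_union2 Sigma mu HS Hm); auto using sigma_tail_out.
      + apply (sigma_and Sigma HS); auto using sigma_tail, sigma_limsup_set.
      + intros x [_ h1] [_ h2]; auto.
    - apply pred_ext; intro x; split.
      + intros [[h _]|[h _]]; auto.
      + intro h. destruct (classic (limsup_set x)); [right|left]; split; auto. }
  assert (Hnull : mu (fun x => tail k x /\ limsup_set x) <= 0).
  { rewrite <- measure_limsup_set. apply (measure_mono Sigma mu HS Hm);
      auto using sigma_limsup_set; [apply (sigma_and Sigma HS); auto using sigma_tail, sigma_limsup_set|].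
    intros x [_ h]; auto. }
  assert (Hk : mu (B k) <= mu (tail k)).
  { apply (measure_mono Sigma mu HS Hm); auto using sigma_tail.
    intros x h; exists k; auto. }
  pose proof (B_pos k). lra.
Qed.

Lemma tail_mass_vanishing rho : 0 < rho -> exists k, tail_mass k < rho.
Proof.
  intros Hr. destruct (half_pow_vanishing rho Hr) as [k Hk].
  exists k. pose proof (tail_mass_le k). lra.
Qed.

Lemma layer_unique k m x : layer k x -> layer m x -> k = m.
Proof.
  intros [Hk Hk'] [Hm1 Hm']. destruct (Nat.lt_trichotomy k m) as [h|[h|h]]; auto.
  - exfalso. apply Hk'. eapply tail_antitone; eauto.
  - exfalso. apply Hm'. eapply tail_antitone; eauto.
Qed.

Lemma tail_out_layer k x : tail_out k x -> exists m, (k <= m)%nat /\ layer m x.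
Proof.
  intros [Hv Hl]. apply NNPP. intro Hno. apply Hl.
  assert (Hall : forall n, tail (k + n) x).
  { induction n as [|n IH]; [rewrite Nat.add_0_r; auto|].
    rewrite Nat.add_succ_r. apply NNPP. intro hv. apply Hno.
    exists (k + n)%nat. split; [lia|split; auto]. }
  intro j. apply (tail_antitone j (k + j)); auto. lia.
Qed.

Lemma layer_tail_out m j x : (j <= m)%nat -> layer m x -> tail_out j x.
Proof.
  intros Hjm [Hv Hn]. split; [eapply tail_antitone; eauto|].
  intro Hl. apply Hn. apply Hl.
Qed.

Section step_function.

Variable c : nat -> R.
Hypothesis c_pos : forall k, 0 < c k.
Hypothesis c_mono : forall k m, (k <= m)%nat -> c k <= c m.

Definition step_fun (x : X) : R :=
  match excluded_middle_informative (exists k, layer k x) with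
  | left H => c (proj1_sig (constructive_indefinite_description _ H))
  | right _ => 0
  end.

Lemma step_fun_layer k x : layer k x -> step_fun x = c k.
Proof.
  intro H. unfold step_fun. destruct excluded_middle_informative as [h|h].
  - destruct constructive_indefinite_description as [m Hm']; simpl.
    f_equal. eapply layer_unique; eauto.
  - exfalso; apply h; exists k; auto.
Qed.

Lemma step_fun_cases x : (exists k, layer k x /\ step_fun x = c k) \/ step_fun x = 0.
Proof.
  destruct (classic (exists k, layer k x)) as [[k Hk]|h].
  - left. exists k. split; auto. apply step_fun_layer; auto.
  - right. unfold step_fun. destruct excluded_middle_informative; tauto.
Qed.

Lemma step_fun_nonneg x : 0 <= step_fun x.
Proof.
  destruct (step_fun_cases x) as [[k [_ ->]]| ->]; [left; auto|lra].
Qed.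

Lemma step_fun_gt y x : 0 <= y -> y < step_fun x -> exists m, layer m x /\ y < c m.
Proof.
  intros Hy H. destruct (step_fun_cases x) as [[m [Hm' Hx]]|Hx]; rewrite Hx in H; [|lra].
  exists m; auto.
Qed.

Lemma sigma_step_fun_gt y : Sigma (fun x => y < step_fun x).
Proof.
  destruct (Rlt_le_dec y 0) as [h|h].
  - replace (fun x => y < step_fun x) with (fun _ : X => True); [apply (sa_full _ HS)|].
    apply pred_ext; intro x; split; auto. intros _. pose proof (step_fun_nonneg x). lra.
  - replace (fun x => y < step_fun x) with (fun x => exists m, y < c m /\ layer m x).
    + apply (sa_union _ HS). intro m. apply (sigma_and_const Sigma HS), sigma_layer.
    + apply pred_ext; intro x; split.
      * intros [m [Hy Hd]]. rewrite (step_fun_layer m x Hd); auto.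
      * intro H. destruct (step_fun_gt y x h H) as [m [Hd Hy]]. eauto.
Qed.

Lemma measurable_step_fun : measurable Sigma step_fun.
Proof. exact sigma_step_fun_gt. Qed.

Lemma distrib_step_fun y : distrib mu step_fun y = mu (fun x => y < step_fun x).
Proof.
  unfold distrib. f_equal. apply pred_ext; intro x.
  rewrite Rabs_pos_eq; [tauto|apply step_fun_nonneg].
Qed.

Lemma distrib_step_fun_ge k y : y < c k -> tail_mass k <= distrib mu step_fun y.
Proof.
  intros Hy. rewrite distrib_step_fun.
  apply (measure_mono Sigma mu HS Hm); auto using sigma_tail_out, sigma_step_fun_gt.
  intros x Hx. destruct (tail_out_layer k x Hx) as [m [Hkm Hd]].
  rewrite (step_fun_layer m x Hd). pose proof (c_mono k m Hkm). lra.
Qed.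

Lemma distrib_step_fun_le k y : c k <= y -> distrib mu step_fun y <= tail_mass (S k).
Proof.
  intros Hy. rewrite distrib_step_fun.
  apply (measure_mono Sigma mu HS Hm); auto using sigma_tail_out, sigma_step_fun_gt.
  intros x H. pose proof (c_pos k). destruct (step_fun_gt y x ltac:(lra) H) as [m [Hd Hym]].
  apply (layer_tail_out m); auto.
  destruct (le_lt_dec m k) as [h|h]; auto. pose proof (c_mono m k h). lra.
Qed.

Lemma distrib_step_fun_le0 y : 0 <= y -> distrib mu step_fun y <= tail_mass O.
Proof.
  intros Hy. rewrite distrib_step_fun.
  apply (measure_mono Sigma mu HS Hm); auto using sigma_tail_out, sigma_step_fun_gt.
  intros x H. destruct (step_fun_gt y x Hy H) as [m [Hd _]]. apply (layer_tail_out m); auto. lia.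
Qed.

Lemma fstar_step_fun_zero t : tail_mass O <= t -> fstar mu step_fun t = 0.
Proof.
  intros Ht. apply Rinf_is_glb. split.
  - intros y [Hy _]; lra.
  - intros b Hb. destruct (Rle_lt_dec b 0) as [h|h]; auto.
    assert (b <= b / 2); [|lra]. apply Hb. split; [lra|].
    eapply Rle_trans; [apply distrib_step_fun_le0; lra|auto].
Qed.

Lemma fstar_step_fun_step k t : tail_mass (S k) <= t < tail_mass k ->
  fstar mu step_fun t = c k.
Proof.
  intros Ht. apply Rinf_is_glb. split.
  - intros y [Hy Hl]. apply Rnot_lt_le. intro h.
    pose proof (distrib_step_fun_ge k y h). lra.
  - intros b Hb. apply Hb. split; [apply c_pos|].
    eapply Rle_trans; [apply (distrib_step_fun_le k); lra|lra].
Qed.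

End step_function.

Lemma staircase_fstar_step_fun a : 0 < a ->
  staircase tail_mass a (fstar mu (step_fun (fun k => Rpower (tail_mass k) (-a)))).
Proof.
  intros Ha.
  assert (Hrange : forall k, 0 < tail_mass k <= 1).
  { intro k. split; [apply tail_mass_pos|].
    eapply Rle_trans; [apply tail_mass_le|]. rewrite <- (pow1 k). apply pow_incr; lra. }
  assert (Hc : forall k, 0 < Rpower (tail_mass k) (-a)) by (intro; apply Rpower_pos).
  assert (Hcm : forall k m, (k <= m)%nat ->
                Rpower (tail_mass k) (-a) <= Rpower (tail_mass m) (-a)).
  { intros k m Hkm. apply Rpower_opp_le; [split; [apply Hrange|]|lra].
    apply tail_mass_antitone; auto. }
  split; auto using tail_mass_antitone, tail_mass_vanishing.
  - intros t Ht. apply fstar_step_fun_zero; auto.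
  - intros k t Ht. exact (fstar_step_fun_step _ Hc Hcm k t Ht).
Qed.

End small_sets.

Lemma staircase_in_GL Sigma mu p q f T a : 1 < q -> 0 < p -> 0 < a < / p ->
  measurable Sigma f -> staircase T a (fstar mu f) -> in_GL Sigma mu p q f.
Proof.
  intros Hq Hp Ha Hf Hg. split; auto.
  assert (Hqp : 0 < q / p) by (apply Rdiv_lt_0_compat; lra).
  assert (Hgap : 0 < q / p - 1 - a * q + 1).
  { replace (q / p - 1 - a * q + 1) with (q * (/ p - a)) by (unfold Rdiv; ring).
    apply Rmult_lt_0_compat; lra. }
  exists (1 + q / p * (q - 1) * / (q / p - 1 - a * q + 1)).
  intros eps He d Hd. assert (Hd' : 0 < d <= 1) by lra.
  destruct (RInt_weighted_power_le T a _ Hg ltac:(lra) (q / p - 1) (q - eps) q d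
              ltac:(lra) Hgap Hd') as [H0 H1].
  exists (ex_RInt_Reals_0 _ _ _ (ex_RInt_weighted_power T a _ Hg (q / p - 1) (q - eps) d Hd')).
  rewrite <- RInt_Reals.
  change (gl_integrand mu p q eps f) with (weighted_power (fstar mu f) (q / p - 1) (q - eps)).
  apply rpow_le_1_plus.
  - split.
    + apply Rmult_le_pos; [apply Rmult_le_pos|]; lra.
    + apply Rmult_le_compat; [apply Rmult_le_pos; lra|lra|apply Rmult_le_compat_l; lra|lra].
  - split; [apply Rdiv_lt_0_compat; lra|].
    unfold Rdiv. rewrite Rmult_1_l, <- Rinv_1. apply Rinv_le_contravar; lra.
Qed.

(* Makes the exponent [a (s - eps) - s / r] in [RInt_weighted_power_ge] positive. *)
Lemma exists_eps_steep r s a : 0 < r -> 1 < s -> / r < a ->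
  exists eps, 0 < eps < s - 1 /\ s / r < a * (s - eps).
Proof.
  intros Hr Hs Ha.
  assert (Hra : 0 < s * (a - / r)) by (apply Rmult_lt_0_compat; lra).
  assert (Ha0 : 0 < a) by (pose proof (Rinv_0_lt_compat r Hr); lra).
  exists (Rmin ((s - 1) / 2) (s * (a - / r) / (2 * a))).
  pose proof (Rmin_l ((s - 1) / 2) (s * (a - / r) / (2 * a))).
  pose proof (Rmin_r ((s - 1) / 2) (s * (a - / r) / (2 * a))).
  split; [split; [apply Rmin_glb_lt; [lra|apply Rdiv_lt_0_compat; lra]|lra]|].
  apply Rlt_le_trans with (a * (s - s * (a - / r) / (2 * a))).
  - replace (a * (s - s * (a - / r) / (2 * a))) with (s / r + s * (a - / r) / 2)
      by (field; lra).
    lra.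
  - apply Rmult_le_compat_l; lra.
Qed.

Lemma staircase_not_in_GL mu r s f T a : 0 < r <= s -> 1 < s -> / r < a ->
  staircase T a (fstar mu f) -> forall C, ~ gl_norm_le mu r s f C.
Proof.
  intros Hr Hs Ha Hg C HC.
  destruct (exists_eps_steep r s a ltac:(lra) Hs Ha) as [eps [Heps Hsteep]].
  assert (Ha0 : 0 < a) by (pose proof (Rinv_0_lt_compat r ltac:(lra)); lra).
  assert (Hsr : 1 <= s / r)
    by (apply (Rmult_le_reg_r r); [lra|]; unfold Rdiv; rewrite Rmult_assoc, Rinv_l; lra).
  set (al := s / r - 1). set (be := s - eps). set (gam := a * be - (1 + al)).
  set (kap := s / r * eps * Rpower (/ 2) (1 + al)).
  assert (Hkap : 0 < kap)
    by (apply Rmult_lt_0_compat; [apply Rmult_lt_0_compat; lra|apply Rpower_pos]).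
  destruct (Rpower_opp_unbounded_at_0 kap gam (1 / be) C Hkap
              ltac:(unfold gam, al, be; lra) ltac:(apply Rdiv_lt_0_compat; unfold be; lra))
    as [rho [Hrho Hbig]].
  destruct (stair_vanishing _ _ _ Hg rho Hrho) as [k Hk].
  destruct (stair_range _ _ _ Hg k) as [HT0 HT1].
  destruct (HC eps ltac:(lra) (T k / 2) ltac:(lra)) as [pr Hpr].
  rewrite <- RInt_Reals in Hpr.
  change (gl_integrand mu r s eps f) with (weighted_power (fstar mu f) al be) in Hpr.
  fold be in Hpr.
  pose proof (RInt_weighted_power_ge T a _ Hg ltac:(lra) al be k
                ltac:(unfold al; lra) ltac:(unfold be; lra)) as Hlow.
  fold gam in Hlow.
  assert (Hmono : rpow (kap * Rpower (T k) (- gam)) (1 / be)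
                  <= rpow (s / r * eps * RInt (weighted_power (fstar mu f) al be) (T k / 2) 1)
                       (1 / be)).
  { apply rpow_le_base; [|apply Rlt_le, Rdiv_lt_0_compat; unfold be; lra]. split.
    - apply Rmult_le_pos; [lra|left; apply Rpower_pos].
    - unfold kap. rewrite Rmult_assoc. apply Rmult_le_compat_l; [|exact Hlow].
      apply Rmult_le_pos; lra. }
  rewrite rpow_pos in Hmono by (apply Rmult_lt_0_compat; [lra|apply Rpower_pos]).
  pose proof (Hbig (T k) ltac:(lra)). lra.
Qed.

Lemma small_sets_staircase Sigma mu : sigma_algebra Sigma -> finite_measure Sigma mu ->
  (forall M, 0 < M -> exists A, Sigma A /\ 0 < mu A /\ mu A < M) ->
  forall a, 0 < a -> exists f T, measurable Sigma f /\ staircase T a (fstar mu f).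
Proof.
  intros HS Hm Hsmall a Ha.
  assert (Hhalf : forall n, 0 < (/ 2) ^ S n) by (intro n; apply pow_lt; lra).
  pose (B n := proj1_sig (constructive_indefinite_description _ (Hsmall _ (Hhalf n)))).
  assert (HB : forall n, Sigma (B n) /\ 0 < mu (B n) /\ mu (B n) < (/ 2) ^ S n)
    by (intro n; exact (proj2_sig (constructive_indefinite_description _ (Hsmall _ (Hhalf n))))).
  exists (step_fun B (fun k => Rpower (tail_mass mu B k) (-a))), (tail_mass mu B). split.
  - apply measurable_step_fun; [exact HS|apply HB|intro; apply Rpower_pos].
  - apply (staircase_fstar_step_fun Sigma); auto; apply HB.
Qed.

Theorem theorem3p5 (p q r s : R) (Sigma : (X -> Prop) -> Prop) (mu : (X -> Prop) -> R) :
  1 < q -> q <= p -> p < r -> r <= s ->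
  sigma_algebra Sigma -> finite_measure Sigma mu ->
  (forall f : X -> R, in_GL Sigma mu p q f -> in_GL Sigma mu r s f) ->
  exists M : R, 0 < M /\ forall A : X -> Prop, Sigma A -> 0 < mu A -> M <= mu A.
Proof.
  intros Hq Hqp Hpr Hrs HS Hm Hinc. apply NNPP. intro Hno.
  assert (Hsmall : forall M, 0 < M -> exists A, Sigma A /\ 0 < mu A /\ mu A < M).
  { intros M HM. apply NNPP. intro Hnone. apply Hno. exists M. split; auto.
    intros A HA HA0. apply Rnot_lt_le. intro HAM. apply Hnone. eauto. }
  assert (Hpr_inv : / r < / p) by (apply Rinv_lt_contravar; [apply Rmult_lt_0_compat|]; lra).
  assert (Hr_inv : 0 < / r) by (apply Rinv_0_lt_compat; lra).
  set (a := (/ p + / r) / 2).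
  destruct (small_sets_staircase Sigma mu HS Hm Hsmall a ltac:(unfold a; lra))
    as [f [T [Hf Hg]]].
  destruct (Hinc f (staircase_in_GL Sigma mu p q f T a ltac:(lra) ltac:(lra)
                      ltac:(unfold a; lra) Hf Hg)) as [_ [C HC]].
  exact (staircase_not_in_GL mu r s f T a ltac:(lra) ltac:(lra) ltac:(unfold a; lra) Hg C HC).
Qed.
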